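(* Let $k\ge 2$, $n=2^k$, and run Jakobsson's pebble-update procedure for $n/2$ steps. Then the only pebble discarded during these $n/2$ steps is the pebble with initial label $k-1$ (initially at position $n/2$); in particular the pebble with initial label $k$ (at the seed position $n$) and all pebbles with initial labels $j\le k-2$ are not discarded.
   Context: Jakobsson's pebble-update procedure (hash-chain preimage traversal). Fix $k\ge 1$ and $n=2^k$. There are $k$ pebbles, identified by their initial label $j\in\{1,\dots,k\}$. Pebble $j$ has two fixed constants $S_j=3\cdot 2^j$ (start increment) and $D_j=2^{j+1}$ (destination increment), and two integer fields $\mathrm{Position}$ and $\mathrm{Destination}$ (which may be set to $+\infty$). Initially $\mathrm{Position}=\mathrm{Destination}=2^j$ for pebble $j$, and a counter $c$ equals $0$. The pebbles are kept sorted by $\mathrm{Position}$, and ''the first pebble'' means the pebble with the smallest $\mathrm{Position}$. One step: (i) if $c=n$, stop; otherwise $c\leftarrow c+1$; (ii) for every pebble with $\mathrm{Position}\ne\mathrm{Destination}$, set $\mathrm{Position}\leftarrow\mathrm{Position}-2$; (iii) if $c$ is even, the first pebble (say with initial label $j$) makes a backward move: $\mathrm{Position}\leftarrow \mathrm{Position}+S_j$, $\mathrm{Destination}\leftarrow\mathrm{Destination}+D_j$; if the new Destination exceeds $n$, both fields are set to $+\infty$ and the pebble is said to be discarded; then the pebbles are re-sorted by $\mathrm{Position}$. (Each pebble also stores a hash-chain value, which does not influence the evolution of the Position and Destination fields.) *)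

From Stdlib Require Import ZArith List Arith Lia.
Import ListNotations.
Open Scope Z_scope.

Inductive ext := Fin (z : Z) | Inf.

Definition ext_eqb (a b : ext) : bool :=
  match a, b with
  | Fin x, Fin y => Z.eqb x y
  | Inf, Inf => true
  | _, _ => false
  end.

Definition ext_leb (a b : ext) : bool :=
  match a, b with
  | Fin x, Fin y => Z.leb x y
  | _, Inf => true
  | Inf, Fin _ => false
  end.

Definition ext_add (a : ext) (d : Z) : ext :=
  match a with Fin x => Fin (x + d) | Inf => Inf end.

Record pebble := mkPebble { label : nat; pos : ext; dest : ext }.

Definition S_ (j : nat) : Z := 3 * 2 ^ Z.of_nat j.
Definition D_ (j : nat) : Z := 2 ^ (Z.of_nat j + 1).

Fixpoint insert_peb (p : pebble) (l : list pebble) : list pebble :=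
  match l with
  | [] => [p]
  | q :: t => if ext_leb (pos p) (pos q) then p :: q :: t else q :: insert_peb p t
  end.

Fixpoint sort_peb (l : list pebble) : list pebble :=
  match l with
  | [] => []
  | p :: t => insert_peb p (sort_peb t)
  end.

Definition dec_peb (p : pebble) : pebble :=
  if ext_eqb (pos p) (dest p) then p
  else mkPebble (label p) (ext_add (pos p) (-2)) (dest p).

Definition back_peb (n : Z) (p : pebble) : pebble :=
  let j := label p in
  let np := ext_add (pos p) (S_ j) in
  let nd := ext_add (dest p) (D_ j) in
  match nd with
  | Fin d => if Z.ltb n d then mkPebble j Inf Inf else mkPebble j np nd
  | Inf => mkPebble j Inf Inf
  end.

(* A state: counter c and the list of pebbles, sorted by Position
   (head = first pebble). *)
Definition state := (nat * list pebble)%type.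

Definition step (n : nat) (s : state) : state :=
  let (c, ps) := s in
  if Nat.eqb c n then s
  else
    let c' := S c in
    let ps1 := map dec_peb ps in
    let ps2 := if Nat.even c' then
                 match ps1 with
                 | [] => []
                 | h :: t => back_peb (Z.of_nat n) h :: t
                 end
               else ps1 in
    (c', sort_peb ps2).

Definition init_state (k : nat) : state :=
  (0%nat, map (fun j => mkPebble j (Fin (2 ^ Z.of_nat j)) (Fin (2 ^ Z.of_nat j)))
              (seq 1 k)).

Definition state_after (k m : nat) : state :=
  Nat.iter m (step (2 ^ k)) (init_state k).

Definition discarded_in (s : state) (j : nat) : Prop :=
  exists p, In p (snd s) /\ label p = j /\ dest p = Inf.

From Stdlib Require Import ZArith List Arith Lia Permutation.
Import ListNotations.
Open Scope Z_scope.

(* Write n = 2^(K+1) and run the procedure for 2^K steps.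
   Pebble j, with m = 2^j, has a closed form: after c steps it has made
   q = (c + m) / (2m) backward moves, its Destination is (2q+1)m, and its
   Position is the Destination plus the part of the last jump (of length 3m,
   made at step (2q-1)m) not yet walked off at speed 2.  Pebble j moves
   exactly at the steps that are odd multiples of 2^j.  Every even step
   c' <= 2^K is such a multiple for exactly one level j <= K (2-adic
   valuation), and that pebble is then resting at Position c', which is the
   smallest Position of all, so it is the "first pebble" that the procedure
   moves.  Hence, up to order, the state after t steps is the list of
   closed-form pebbles, with discarding when the Destination exceeds n.
   Within 2^K steps this only happens for j = K, at step 2^K. *)

Section ClosedForm.

Variable m : Z.
Hypothesis m_pos : 0 < m.

(* The pebble makes a backward move at step c (c an odd multiple of m). *)
Definition moves_at (c : Z) : Prop := (c + m) mod (2 * m) = 0.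
(* Number of backward moves made during the first c steps. *)
Definition round (c : Z) : Z := (c + m) / (2 * m).
Definition dest_at (c : Z) : Z := (2 * round c + 1) * m.
(* Position after c steps: the last jump, made at step (2q-1)m, put the
   pebble m beyond its Destination; it then walks down 2 per step. *)
Definition pos_at (c : Z) : Z :=
  Z.max (dest_at c) (dest_at c + m - 2 * (c - (2 * round c - 1) * m)).

Lemma round_stay c : ~ moves_at (c + 1) -> round (c + 1) = round c.
Proof.
  unfold moves_at, round; intros Hstay.
  pose proof (Z.div_mod (c + m) (2 * m) ltac:(lia)) as Hdiv.
  pose proof (Z.mod_pos_bound (c + m) (2 * m) ltac:(lia)) as Hbound.
  set (q := (c + m) / (2 * m)) in *; set (r := (c + m) mod (2 * m)) in *.
  destruct (Z.eq_dec (r + 1) (2 * m)) as [Hwrap | Hwrap].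
  - exfalso; apply Hstay.
    replace (c + 1 + m) with ((q + 1) * (2 * m)) by lia. apply Z_mod_mult.
  - symmetry; apply Z.div_unique with (r + 1); lia.
Qed.

Lemma dest_at_bounds c : 0 <= c -> c + 1 <= dest_at c <= c + 2 * m.
Proof.
  unfold dest_at, round; intros Hc.
  pose proof (Z.div_mod (c + m) (2 * m) ltac:(lia)).
  pose proof (Z.mod_pos_bound (c + m) (2 * m) ltac:(lia)). lia.
Qed.

Lemma dest_at_initial c : 0 <= c < m -> dest_at c = m.
Proof. intros Hc. unfold dest_at, round. rewrite Z.div_small by lia. lia. Qed.

Lemma pos_at_initial : pos_at 0 = m.
Proof. unfold pos_at. rewrite dest_at_initial by lia. unfold round. rewrite Z.div_small; lia. Qed.

Lemma dest_le_pos c : dest_at c <= pos_at c.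
Proof. unfold pos_at. lia. Qed.

Lemma dest_tight_moves c : dest_at c = c + 1 -> moves_at (c + 1).
Proof.
  unfold dest_at, moves_at; intros Htight.
  replace (c + 1 + m) with ((round c + 1) * (2 * m)) by lia. apply Z_mod_mult.
Qed.

Lemma move_jump c : moves_at (c + 1) ->
  pos_at c = c + 1 /\ dest_at c = c + 1 /\
  dest_at (c + 1) = c + 1 + 2 * m /\ pos_at (c + 1) = c + 1 + 3 * m.
Proof.
  unfold moves_at; intros Hmove.
  pose proof (Z_div_exact_full_2 (c + 1 + m) (2 * m) ltac:(lia) Hmove) as Hexact.
  assert (Hround : round c = round (c + 1) - 1).
  { unfold round. symmetry; apply Z.div_unique with (2 * m - 1); lia. }
  assert (Hdest : dest_at c = c + 1).
  { unfold dest_at; rewrite Hround; unfold round. lia. }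
  assert (Hdest' : dest_at (c + 1) = c + 1 + 2 * m).
  { unfold dest_at, round. lia. }
  unfold pos_at; rewrite Hdest, Hdest'.
  replace (round (c + 1)) with ((c + 1 + m) / (2 * m)) by reflexivity.
  rewrite Hround; unfold round. lia.
Qed.

Lemma stay_rest c : Z.Even m -> ~ moves_at (c + 1) ->
  dest_at (c + 1) = dest_at c /\
  (pos_at c = dest_at c -> pos_at (c + 1) = pos_at c) /\
  (pos_at c <> dest_at c -> pos_at (c + 1) = pos_at c - 2).
Proof.
  intros [h Hh] Hstay.
  unfold pos_at, dest_at; rewrite (round_stay c Hstay).
  set (q := round c); clearbody q. rewrite Hh. nia.
Qed.

End ClosedForm.

Definition level (j : nat) : Z := 2 ^ Z.of_nat j.

Lemma level_pos j : 0 < level j.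
Proof. apply Z.pow_pos_nonneg; lia. Qed.

Lemma level_succ j : level (S j) = 2 * level j.
Proof. unfold level. rewrite Nat2Z.inj_succ, Z.pow_succ_r by lia. reflexivity. Qed.

Lemma level_even j : (1 <= j)%nat -> Z.Even (level j).
Proof. intros Hj. destruct j as [|j]; [lia|]. exists (level j). apply level_succ. Qed.

Lemma level_of_nat j : Z.of_nat (2 ^ j) = level j.
Proof. unfold level. rewrite Nat2Z.inj_pow. reflexivity. Qed.

(* At most one level moves at a given step: c is an odd multiple of 2^i
   for one exponent i only. *)
Lemma moves_at_unique i l c :
  moves_at (level i) c -> moves_at (level l) c -> i = l.
Proof.
  assert (Hlt : forall i l, (i < l)%nat ->
            moves_at (level i) c -> moves_at (level l) c -> False).
  { clear i l; intros i l Hil Hi Hl; unfold moves_at in Hi, Hl.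
    set (u := level i) in *.
    assert (Hu : 0 < u) by apply level_pos.
    assert (Hw : level l = 2 * u * level (l - i - 1)).
    { unfold u, level. replace (Z.of_nat l) with (Z.of_nat i + 1 + Z.of_nat (l - i - 1)) by lia.
      rewrite !Z.pow_add_r by lia. ring. }
    rewrite Hw in Hl. set (w := level (l - i - 1)) in *.
    assert (Hw0 : 0 < w) by apply level_pos.
    pose proof (Z_div_exact_full_2 (c + u) (2 * u) ltac:(lia) Hi) as Ei.
    pose proof (Z_div_exact_full_2 (c + 2 * u * w) (2 * (2 * u * w)) ltac:(nia) Hl) as El.
    set (a := (c + u) / (2 * u)) in *; set (b := (c + 2 * u * w) / (2 * (2 * u * w))) in *.
    assert (Hzero : u * (2 * a - 1 + 2 * w - 4 * w * b) = 0) by nia.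
    apply Z.mul_eq_0 in Hzero. lia. }
  intros Hi Hl. destruct (Nat.lt_total i l) as [H | [H | H]]; auto; exfalso; eauto.
Qed.

Lemma moves_at_even m c : Z.Even m -> moves_at m c -> Z.Even c.
Proof.
  intros [h Hh] Hmove; unfold moves_at in Hmove; subst m.
  destruct (Z.eq_dec h 0) as [-> | Hh0]; [exists 0; simpl in Hmove; rewrite Zmod_0_r in Hmove; lia|].
  apply Z.mod_divide in Hmove; [|lia]. destruct Hmove as [a Ha].
  exists (2 * h * a - h). lia.
Qed.

Lemma moves_at_parity j t : (1 <= j)%nat -> moves_at (level j) (Z.of_nat t + 1) ->
  Nat.even (S t) = true.
Proof.
  intros Hj Hmove. destruct (moves_at_even _ _ (level_even j Hj) Hmove) as [a Ha].
  apply Nat.even_spec. exists (Z.to_nat a). lia.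
Qed.

Lemma two_adic_decomposition (x : nat) :
  (1 <= x)%nat -> exists j r : nat, x = (2 ^ j * (2 * r + 1))%nat.
Proof.
  induction x as [x IH] using (well_founded_induction lt_wf); intros Hx.
  destruct (Nat.Even_or_Odd x) as [[y Hy] | [y Hy]].
  - destruct (IH y ltac:(lia) ltac:(lia)) as [j [r Hr]].
    exists (S j), r. rewrite Nat.pow_succ_r'. lia.
  - exists 0%nat, y. simpl. lia.
Qed.

Lemma mover_exists (K x : nat) : (1 <= x <= 2 ^ K)%nat -> Nat.even x = true ->
  exists j, (1 <= j <= K)%nat /\ moves_at (level j) (Z.of_nat x).
Proof.
  intros Hx Heven. destruct (two_adic_decomposition x ltac:(lia)) as [j [r Hr]].
  exists j; repeat split.
  - destruct j as [|j]; [|lia].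
    rewrite Hr, Nat.pow_0_r, Nat.mul_1_l, Nat.add_comm, Nat.even_add_mul_2 in Heven.
    discriminate.
  - destruct (Nat.le_gt_cases j K) as [H | H]; [exact H | exfalso].
    assert (2 ^ S K <= 2 ^ j)%nat by (apply Nat.pow_le_mono_r; lia).
    rewrite Nat.pow_succ_r' in *. nia.
  - unfold moves_at. rewrite Hr, Nat2Z.inj_mul, level_of_nat.
    replace (level j * Z.of_nat (2 * r + 1) + level j)
      with ((Z.of_nat r + 1) * (2 * level j)) by lia.
    apply Z_mod_mult.
Qed.

Definition peb_at (j t : nat) : pebble :=
  mkPebble j (Fin (pos_at (level j) (Z.of_nat t))) (Fin (dest_at (level j) (Z.of_nat t))).

Definition tracked (n : Z) (j t : nat) : pebble :=
  if n <? dest_at (level j) (Z.of_nat t) then mkPebble j Inf Inf else peb_at j t.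

Lemma peb_stay j t : (1 <= j)%nat -> ~ moves_at (level j) (Z.of_nat t + 1) ->
  dec_peb (peb_at j t) = peb_at j (S t).
Proof.
  intros Hj Hstay.
  destruct (stay_rest (level j) (level_pos j) (Z.of_nat t) (level_even j Hj) Hstay) as [Hdest [Hrest Hadv]].
  unfold dec_peb, peb_at; rewrite Nat2Z.inj_succ, <- Z.add_1_r; cbn [ext_eqb pos dest label].
  rewrite Hdest. destruct (Z.eqb_spec (pos_at (level j) (Z.of_nat t)) (dest_at (level j) (Z.of_nat t))) as [E | E].
  - rewrite (Hrest E). reflexivity.
  - cbn [ext_add]. rewrite (Hadv E). reflexivity.
Qed.

Lemma peb_move n j t : moves_at (level j) (Z.of_nat t + 1) ->
  back_peb n (dec_peb (peb_at j t)) = tracked n j (S t).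
Proof.
  intros Hmove.
  destruct (move_jump (level j) (level_pos j) (Z.of_nat t) Hmove) as [Hpos [Hdest [Hdest' Hpos']]].
  assert (HD : D_ j = 2 * level j).
  { unfold D_, level. rewrite Z.pow_add_r by lia. lia. }
  unfold dec_peb, tracked, peb_at, back_peb; rewrite Nat2Z.inj_succ, <- Z.add_1_r.
  cbn [ext_eqb pos dest label ext_add]. rewrite Hpos, Hdest, Z.eqb_refl.
  cbn [pos dest label ext_add]. rewrite HD, Hdest', Hpos'. unfold S_, level. reflexivity.
Qed.

Lemma dest_exceeds_iff (K j : nat) (c : Z) : (1 <= j <= S K)%nat -> 0 <= c <= level K ->
  2 * level K < dest_at (level j) c <-> c = level K /\ j = K.
Proof.
  intros Hj Hc. pose proof (level_pos K) as HN.
  destruct (Nat.eq_dec j (S K)) as [-> | HjSK]; [|destruct (Nat.eq_dec j K) as [-> | HjK]].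
  - rewrite level_succ, dest_at_initial by lia. lia.
  - destruct (Z.eq_dec c (level K)) as [-> | Hne].
    + unfold dest_at, round. replace (level K + level K) with (1 * (2 * level K)) by lia.
      rewrite Z.div_mul by lia. lia.
    + rewrite dest_at_initial by lia. lia.
  - assert (Hsmall : 2 * level j <= level K).
    { rewrite <- level_succ. unfold level. apply Z.pow_le_mono_r; lia. }
    pose proof (dest_at_bounds (level j) (level_pos j) c ltac:(lia)). lia.
Qed.

Lemma tracked_discarded (K j t : nat) : (1 <= j <= S K)%nat -> (t <= 2 ^ K)%nat ->
  dest (tracked (Z.of_nat (2 ^ S K)) j t) = Inf <-> t = (2 ^ K)%nat /\ j = K.
Proof.
  intros Hj Ht.
  pose proof (dest_exceeds_iff K j (Z.of_nat t) Hj) as Hcrit.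
  unfold tracked. rewrite level_of_nat, level_succ.
  rewrite <- (level_of_nat K) in *.
  destruct (Z.ltb_spec (2 * Z.of_nat (2 ^ K)) (dest_at (level j) (Z.of_nat t))) as [H | H];
    cbn [dest].
  - apply Hcrit in H; [|lia]. destruct H as [Et ->]. split; [intros _; split; lia | reflexivity].
  - split; [discriminate|]. intros [-> ->].
    exfalso. apply (proj1 (Z.le_ngt _ _) H), Hcrit; lia.
Qed.

Lemma insert_perm p l : Permutation (insert_peb p l) (p :: l).
Proof.
  induction l as [|q l IH]; cbn; [auto|].
  destruct (ext_leb (pos p) (pos q)); [auto|].
  eapply perm_trans; [apply perm_skip, IH | apply perm_swap].
Qed.

Lemma sort_perm l : Permutation (sort_peb l) l.
Proof.
  induction l as [|p l IH]; cbn; [auto|].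
  eapply perm_trans; [apply insert_perm | auto].
Qed.

Definition HeadMin (l : list pebble) : Prop :=
  match l with
  | [] => True
  | h :: _ => forall x, In x l -> ext_leb (pos h) (pos x) = true
  end.

Lemma ext_leb_refl a : ext_leb a a = true.
Proof. destruct a; cbn; [apply Z.leb_refl | reflexivity]. Qed.

Lemma ext_leb_trans a b c : ext_leb a b = true -> ext_leb b c = true -> ext_leb a c = true.
Proof. destruct a, b, c; cbn; rewrite ?Z.leb_le; auto; try discriminate; lia. Qed.

Lemma ext_leb_total a b : ext_leb a b = false -> ext_leb b a = true.
Proof. destruct a, b; cbn; rewrite ?Z.leb_gt, ?Z.leb_le; auto; try discriminate; lia. Qed.

Lemma insert_headmin p l : HeadMin l -> HeadMin (insert_peb p l).
Proof.
  destruct l as [|q l]; cbn.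
  - intros _ x [<- | []]. apply ext_leb_refl.
  - intros Hmin. destruct (ext_leb (pos p) (pos q)) eqn:Hpq; cbn; intros x [<- | Hx].
    + apply ext_leb_refl.
    + apply ext_leb_trans with (pos q); auto.
    + apply ext_leb_refl.
    + apply (Permutation_in _ (insert_perm p l)) in Hx as [<- | Hx].
      * apply ext_leb_total, Hpq.
      * apply Hmin; right; exact Hx.
Qed.

Lemma sort_headmin l : HeadMin (sort_peb l).
Proof. induction l as [|p l IH]; cbn; [exact I | apply insert_headmin, IH]. Qed.

Definition advance (n c : nat) (ps : list pebble) : list pebble :=
  let ps1 := map dec_peb ps in
  if Nat.even c then
    match ps1 with [] => [] | h :: t => back_peb (Z.of_nat n) h :: t end
  else ps1.

Lemma step_eq n c ps : c <> n -> step n (c, ps) = (S c, sort_peb (advance n (S c) ps)).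
Proof. intros Hc. unfold step. rewrite (proj2 (Nat.eqb_neq c n) Hc). reflexivity. Qed.

Section Model.

Variable K : nat.
Let n : Z := Z.of_nat (2 ^ S K).

Definition model (t : nat) : list pebble := map (fun j => tracked n j t) (seq 1 (S K)).

Lemma label_tracked j t : label (tracked n j t) = j.
Proof. unfold tracked. destruct (_ <? _); reflexivity. Qed.

Lemma model_labels t : map label (model t) = seq 1 (S K).
Proof.
  unfold model. rewrite map_map. erewrite map_ext; [apply map_id | intros j; apply label_tracked].
Qed.

Lemma tracked_live j t : (1 <= j <= S K)%nat -> (t < 2 ^ K)%nat -> tracked n j t = peb_at j t.
Proof.
  intros Hj Ht. pose proof (tracked_discarded K j t Hj ltac:(lia)) as Hdisc.
  unfold tracked in *. destruct (_ <? _); [|reflexivity].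
  exfalso. destruct Hdisc as [Hdisc _]. specialize (Hdisc eq_refl). lia.
Qed.

Lemma model_member t ps x : (t < 2 ^ K)%nat -> Permutation ps (model t) -> In x ps ->
  exists j, (1 <= j <= S K)%nat /\ x = peb_at j t.
Proof.
  intros Ht Hperm Hx. apply (Permutation_in _ Hperm), in_map_iff in Hx.
  destruct Hx as [j [<- Hj]]. apply in_seq in Hj.
  exists j. split; [lia | apply tracked_live; lia].
Qed.

Lemma relabel t t' ps : Permutation ps (model t) ->
  Permutation (map (fun x => tracked n (label x) t') ps) (model t').
Proof.
  intros Hperm. eapply perm_trans; [apply Permutation_map, Hperm|].
  unfold model. rewrite map_map.
  rewrite (map_ext _ (fun j => tracked n j t')); [reflexivity|].
  intros j. rewrite label_tracked. reflexivity.
Qed.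

Lemma peb_stay_tracked j t : (1 <= j <= S K)%nat -> (t < 2 ^ K)%nat ->
  ~ moves_at (level j) (Z.of_nat t + 1) -> dec_peb (peb_at j t) = tracked n j (S t).
Proof.
  intros Hj Ht Hstay. rewrite peb_stay by (auto; lia).
  unfold tracked, n. rewrite Nat2Z.inj_succ, <- Z.add_1_r, level_of_nat, level_succ.
  rewrite (proj1 (stay_rest _ (level_pos j) _ (level_even j ltac:(lia)) Hstay)).
  destruct (Z.ltb_spec (2 * level K) (dest_at (level j) (Z.of_nat t))) as [H | H]; [|reflexivity].
  apply dest_exceeds_iff in H; rewrite <- level_of_nat in *; lia.
Qed.

(* The first pebble is the one whose level moves: that pebble rests at
   Position t+1, below which no pebble lies. *)
Lemma head_is_mover t h tl j0 : (t < 2 ^ K)%nat ->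
  Permutation (h :: tl) (model t) -> HeadMin (h :: tl) ->
  (1 <= j0 <= S K)%nat -> moves_at (level j0) (Z.of_nat t + 1) -> h = peb_at j0 t.
Proof.
  intros Ht Hperm Hmin Hj0 Hmove.
  assert (Hin : In (peb_at j0 t) (h :: tl)).
  { apply (Permutation_in _ (Permutation_sym Hperm)).
    rewrite <- (tracked_live j0 t) by lia. apply (in_map (fun j => tracked n j t)), in_seq. lia. }
  destruct (model_member t _ h Ht Hperm (or_introl eq_refl)) as [i [Hi ->]].
  specialize (Hmin _ Hin). cbn in Hmin. apply Z.leb_le in Hmin.
  destruct (move_jump _ (level_pos j0) _ Hmove) as [Hpos _].
  pose proof (dest_le_pos (level i) (Z.of_nat t)).
  pose proof (dest_at_bounds _ (level_pos i) (Z.of_nat t) ltac:(lia)).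
  assert (Hi_moves : moves_at (level i) (Z.of_nat t + 1)) by (apply dest_tight_moves; lia).
  rewrite (moves_at_unique _ _ _ Hi_moves Hmove). reflexivity.
Qed.

(* Odd step: no pebble moves. *)
Lemma advance_odd t ps : (t < 2 ^ K)%nat -> Nat.even (S t) = false ->
  Permutation ps (model t) -> Permutation (map dec_peb ps) (model (S t)).
Proof.
  intros Ht Hodd Hperm.
  rewrite (map_ext_in _ (fun x => tracked n (label x) (S t))); [exact (relabel t (S t) ps Hperm)|].
  intros x Hx. destruct (model_member t ps x Ht Hperm Hx) as [j [Hj ->]].
  apply peb_stay_tracked; auto.
  intros Hmove. rewrite (moves_at_parity j t ltac:(lia) Hmove) in Hodd. discriminate.
Qed.

(* Even step: the first pebble is the unique mover; all others just walk. *)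
Lemma advance_even t ps : (t < 2 ^ K)%nat -> Nat.even (S t) = true ->
  Permutation ps (model t) -> HeadMin ps ->
  Permutation (advance (2 ^ S K) (S t) ps) (model (S t)).
Proof.
  intros Ht Heven Hperm Hmin. unfold advance. rewrite Heven.
  destruct (mover_exists K (S t) ltac:(lia) Heven) as [j0 [Hj0 Hmove]].
  rewrite Nat2Z.inj_succ, <- Z.add_1_r in Hmove.
  destruct ps as [|h tl].
  { apply Permutation_length in Hperm. unfold model in Hperm.
    rewrite length_map, length_seq in Hperm. discriminate. }
  pose proof (head_is_mover t h tl j0 Ht Hperm Hmin ltac:(lia) Hmove) as ->.
  assert (Hfresh : ~ In j0 (map label tl)).
  { pose proof (Permutation_map label Hperm) as Hlabels. rewrite model_labels in Hlabels.
    apply Permutation_sym, Permutation_NoDup in Hlabels; [|apply seq_NoDup].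
    inversion Hlabels; assumption. }
  cbn [map]. fold n. rewrite (peb_move n j0 t Hmove).
  replace (tracked n j0 (S t)) with (tracked n (label (peb_at j0 t)) (S t)) by reflexivity.
  rewrite (map_ext_in dec_peb (fun x => tracked n (label x) (S t)) tl);
    [apply (relabel t (S t) (peb_at j0 t :: tl) Hperm)|].
  intros x Hx. destruct (model_member t _ x Ht Hperm (or_intror Hx)) as [l [Hl ->]].
  apply peb_stay_tracked; auto. intros Hl_moves.
  apply Hfresh. rewrite <- (moves_at_unique _ _ _ Hl_moves Hmove).
  apply (in_map label _ _ Hx).
Qed.

Lemma initial_model : snd (init_state (S K)) = model 0 /\ HeadMin (snd (init_state (S K))).
Proof.
  assert (Hinit : forall j, (1 <= j <= S K)%nat ->
            tracked n j 0 = mkPebble j (Fin (level j)) (Fin (level j))).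
  { intros j Hj. rewrite tracked_live by (auto; pose proof (Nat.pow_nonzero 2 K); lia).
    unfold peb_at. rewrite pos_at_initial, dest_at_initial by (pose proof (level_pos j); lia).
    reflexivity. }
  split.
  - cbn [snd init_state]. apply map_ext_in. intros j Hj. apply in_seq in Hj.
    rewrite Hinit by lia. reflexivity.
  - cbn [snd init_state seq map]. intros x [<- | Hx]; [apply ext_leb_refl|].
    apply in_map_iff in Hx as [j [<- Hj]]. apply in_seq in Hj. cbn [pos ext_leb].
    apply Z.leb_le, Z.pow_le_mono_r; lia.
Qed.

Lemma state_after_model t : (t <= 2 ^ K)%nat ->
  exists ps, state_after (S K) t = (t, ps) /\ Permutation ps (model t) /\ HeadMin ps.
Proof.
  induction t as [|t IH]; intros Ht.
  - destruct initial_model as [Hlist Hmin].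
    exists (snd (init_state (S K))). split; [reflexivity|]. rewrite Hlist in *. auto.
  - destruct (IH ltac:(lia)) as [ps [Hstate [Hperm Hmin]]].
    exists (sort_peb (advance (2 ^ S K) (S t) ps)).
    split; [|split; [|apply sort_headmin]].
    + change (state_after (S K) (S t)) with (step (2 ^ S K) (state_after (S K) t)).
      rewrite Hstate, step_eq; [reflexivity|].
      rewrite Nat.pow_succ_r'. lia.
    + eapply perm_trans; [apply sort_perm|].
      destruct (Nat.even (S t)) eqn:Hparity.
      * apply advance_even; auto; lia.
      * unfold advance. rewrite Hparity. apply advance_odd; auto; lia.
Qed.

Lemma discarded_iff t ps j : (t <= 2 ^ K)%nat -> Permutation ps (model t) ->
  (1 <= j <= S K)%nat ->
  (exists p, In p ps /\ label p = j /\ dest p = Inf) <-> t = (2 ^ K)%nat /\ j = K.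
Proof.
  intros Ht Hperm Hj. split.
  - intros [p [Hin [Hlabel Hdest]]].
    apply (Permutation_in _ Hperm), in_map_iff in Hin as [l [<- Hl]].
    rewrite label_tracked in Hlabel. subst l.
    apply tracked_discarded; auto.
  - intros Hdisc. exists (tracked n j t). repeat split.
    + apply (Permutation_in _ (Permutation_sym Hperm)), (in_map (fun j => tracked n j t)), in_seq.
      lia.
    + apply label_tracked.
    + apply tracked_discarded; auto.
Qed.

End Model.

Theorem fact5 (k : nat) (hk : (2 <= k)%nat) :
  forall j : nat, (1 <= j <= k)%nat ->
    ((exists t : nat, (t <= 2 ^ k / 2)%nat /\ discarded_in (state_after k t) j)
     <-> j = (k - 1)%nat).
Proof.
  intros j Hj. destruct k as [|K]; [lia|].
  replace (S K - 1)%nat with K by lia.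
  replace (2 ^ S K / 2)%nat with (2 ^ K)%nat
    by (rewrite Nat.pow_succ_r', Nat.mul_comm, Nat.div_mul; lia).
  split.
  - intros [t [Ht Hdisc]].
    destruct (state_after_model K t Ht) as [ps [Hstate [Hperm _]]].
    unfold discarded_in in Hdisc. rewrite Hstate in Hdisc.
    apply (discarded_iff K t ps j Ht Hperm Hj) in Hdisc. tauto.
  - intros ->. exists (2 ^ K)%nat. split; [lia|].
    destruct (state_after_model K (2 ^ K) (le_n _)) as [ps [Hstate [Hperm _]]].
    unfold discarded_in. rewrite Hstate.
    apply (discarded_iff K (2 ^ K) ps K (le_n _) Hperm Hj). auto.
Qed.
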